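(* Let $G$ be a group with identity $e$, $A$ a finite set with $|A|\ge2$, $S\subseteq G$ finite with $e\in S$, and suppose $(\mathcal P,f)$ generates a local map $\mu:A^S\to A$. Let $s\in S\setminus\{e\}$. (1) If there exist $p\in\mathcal P$ and $z\in\mathcal P^c$ with $\mathrm{Res}_s(p)=\mathrm{Res}_s(z)$, then $s$ is essential for $\mu$. (2) If $s$ is essential for $\mu$ and $f$ is well-behaved, then there exist $p\in\mathcal P$ and $z\in\mathcal P^c$ with $\mathrm{Res}_s(p)=\mathrm{Res}_s(z)$.
   Context: $A^S$ is the set of functions $S\to A$. For $s\in S$, $\mathrm{Res}_s:A^S\to A^{S\setminus\{s\}}$ is $\mathrm{Res}_s(z)=z|_{S\setminus\{s\}}$. An element $s\in S$ is essential for $\mu$ if there exist $z,w\in A^S$ with $\mathrm{Res}_s(z)=\mathrm{Res}_s(w)$ but $\mu(z)\neq\mu(w)$. The pair $(\mathcal P,f)$ generates $\mu$ if $\mathcal P=\{z\in A^S:\mu(z)\neq z(e)\}$ and $f:\mathcal P\to A$ is the restriction of $\mu$ to $\mathcal P$; $\mathcal P^c=A^S\setminus\mathcal P$. The function $f$ is well-behaved if for all $p,q\in\mathcal P$: $p(e)=q(e)$ if and only if $f(p)=f(q)$. *)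

From mathcomp Require Import all_boot.
From Stdlib Require Import List.

Set Implicit Arguments.
Unset Strict Implicit.
Unset Printing Implicit Defensive.

Record is_group (G : Type) (mul : G -> G -> G) (inv : G -> G) (e : G) : Prop := {
  grp_assoc : forall x y z, mul x (mul y z) = mul (mul x y) z;
  grp_idl : forall x, mul e x = x;
  grp_idr : forall x, mul x e = x;
  grp_invl : forall x, mul (inv x) x = e;
  grp_invr : forall x, mul x (inv x) = e }.

Definition finite_subset (G : Type) (S : G -> Prop) : Prop :=
  exists l : list G, forall x, S x <-> In x l.

Definition conf (G : Type) (S : G -> Prop) (A : Type) := {x : G | S x} -> A.

Definition minus1 (G : Type) (S : G -> Prop) (s : G) := {x : G | S x /\ x <> s}.

Definition Res (G : Type) (S : G -> Prop) (A : Type) (s : G) (z : conf S A)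
  : minus1 S s -> A :=
  fun x => z (exist _ (proj1_sig x) (proj1 (proj2_sig x))).

Arguments Res {G S A} s z _.

Definition essential (G : Type) (S : G -> Prop) (A : Type) (mu : conf S A -> A) (s : G)
  : Prop :=
  exists z w : conf S A, Res s z = Res s w /\ mu z <> mu w.

Definition generates (G : Type) (S : G -> Prop) (A : Type) (e : G) (eS : S e)
  (mu : conf S A -> A) (P : conf S A -> Prop) (f : {z : conf S A | P z} -> A) : Prop :=
  (forall z, P z <-> mu z <> z (exist _ e eS)) /\
  (forall p : {z : conf S A | P z}, f p = mu (proj1_sig p)).

Definition well_behaved (G : Type) (S : G -> Prop) (A : Type) (e : G) (eS : S e)
  (P : conf S A -> Prop) (f : {z : conf S A | P z} -> A) : Prop :=
  forall p q : {z : conf S A | P z},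
    proj1_sig p (exist _ e eS) = proj1_sig q (exist _ e eS) <-> f p = f q.

Arguments essential {G S A} mu s.
Arguments generates {G S A e} eS mu P f.
Arguments well_behaved {G S A e} eS P f.

From mathcomp Require Import all_boot.
From Stdlib Require Import ProofIrrelevance.

Set Implicit Arguments.
Unset Strict Implicit.

Section Restriction.

Variables (G : Type) (S : G -> Prop) (A : Type) (s : G).

Lemma Res_eq_at (x : G) (Sx : S x) (z w : conf S A) :
  x <> s -> Res s z = Res s w -> z (exist _ x Sx) = w (exist _ x Sx).
Proof.
move=> xs /(congr1 (fun F => F (exist _ x (conj Sx xs)))).
(* [proj1] is opaque, so the membership proof it returns is only equal to [Sx] up to irrelevance. *)
by rewrite /Res /= (proof_irrelevance _ (proj1 _) Sx).
Qed.

End Restriction.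

Section GeneratedLocalMap.

Variables (G : Type) (S : G -> Prop) (A : eqType) (e : G) (eS : S e).
Variables (mu : conf S A -> A) (P : conf S A -> Prop) (f : {z : conf S A | P z} -> A).
Hypothesis hgen : generates eS mu P f.

Let at_e (z : conf S A) : A := z (exist _ e eS).

Lemma generates_notP (z : conf S A) : ~ P z -> mu z = at_e z.
Proof.
move=> nPz; case: (eqVneq (mu z) (at_e z)) => // /eqP neq.
by case: nPz; apply/(proj1 hgen).
Qed.

Lemma generates_P_or_notP (z : conf S A) : P z \/ ~ P z.
Proof.
case: (eqVneq (mu z) (at_e z)) => [mu_e | /eqP neq].
  by right => /(proj1 hgen).
by left; apply/(proj1 hgen).
Qed.

Variables (s : G) (hes : e <> s).

Lemma essential_of_Res_P_notP (p z : conf S A) :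
  P p -> ~ P z -> Res s p = Res s z -> essential mu s.
Proof.
move=> Pp nPz pz; exists p, z; split => //.
rewrite (generates_notP nPz) /at_e -(Res_eq_at eS hes pz).
exact/(proj1 hgen).
Qed.

Lemma Res_P_notP_of_essential : well_behaved eS P f -> essential mu s ->
  exists p z : conf S A, P p /\ ~ P z /\ Res s p = Res s z.
Proof.
move=> wb [z [w [zw neq]]].
have ezw : at_e z = at_e w := Res_eq_at eS hes zw.
case: (generates_P_or_notP z) => Pz; case: (generates_P_or_notP w) => Pw.
- case: neq; have := proj1 (wb (exist _ z Pz) (exist _ w Pw)) ezw.
  by rewrite !(proj2 hgen).
- by exists z, w.
- by exists w, z.
- by case: neq; rewrite (generates_notP Pz) (generates_notP Pw).
Qed.

End GeneratedLocalMap.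

Theorem mainTheorem2 (G : Type) (mul : G -> G -> G) (inv : G -> G) (e : G)
  (hG : is_group mul inv e) (A : finType) (hA : 1 < #|A|)
  (S : G -> Prop) (hSfin : finite_subset S) (eS : S e)
  (mu : conf S A -> A) (P : conf S A -> Prop) (f : {z : conf S A | P z} -> A)
  (hgen : generates eS mu P f) (s : G) (hs : S s) (hse : s <> e) :
  ((exists p z : conf S A, P p /\ ~ P z /\ Res s p = Res s z) -> essential mu s) /\
  (essential mu s -> well_behaved eS P f ->
     exists p z : conf S A, P p /\ ~ P z /\ Res s p = Res s z).
Proof.
have hes : e <> s by move=> es; apply: hse.
split.
  by move=> [p [z [Pp [nPz pz]]]]; exact: (essential_of_Res_P_notP hgen hes Pp nPz pz).
by move=> ess wb; exact: (Res_P_notP_of_essential hgen hes wb ess).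
Qed.
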